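(* Let $k\ge1$, $n\ge 2k+1$ and let $\{x,y\}$ be a connector. Then $(x,f(x),y,f(y))$ is a $4$-cycle in the Kneser graph $K(n,k)$.
   Context: Vertices of $K(n,k)$ are identified with $X_{n,k}$, the binary strings of length $n$ with $k$ ones (characteristic vectors); two strings are adjacent iff they have no $1$ at a common position. Positions are cyclic mod $n$; $\sigma^i(z)$ denotes the cyclic right shift of $z$ by $i$ positions. Cyclic parenthesis matching: $1$s opening, $0$s closing brackets; each $1$ at position $i$ is matched to the last $0$ of the shortest cyclic substring starting at $i$ going right with equally many $0$s and $1$s (all $1$s get matched, $n-2k$ zeros are unmatched). $f(x)$ is $x$ with all matched bits complemented. A matched pair (a $1$ and the $0$ matched to it) is visible if it is not enclosed by another matched pair, i.e. there is no other matched pair whose cyclic interval from its $1$ to its $0$ contains both positions of the given pair. $D$ denotes the set of Dyck words (equally many $0$s and $1$s, at least as many $1$s as $0$s in every prefix, including the empty word). A connector is an unordered pair $\{x,y\}$ of strings in $X_{n,k}$ such that for some $i\ge0$, some $u,w\in D$ and some binary strings $p,q,r$, $x=\sigma^i(p\,1\,u\,0\,q\,0\,w\,0\,r)$ and $y=\sigma^i(p\,0\,u\,0\,q\,1\,w\,0\,r)$, where in $x$ the displayed $1$ and $0$ around $u$ are matched to each other and form a visible pair, and the two displayed $0$s around $w$ are unmatched in $x$. *)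

(* Binary strings are [seq bool] (true = 1, false = 0);
   positions are 0 .. size-1, taken cyclically (mod size). *)
From mathcomp Require Import all_boot.
Set Implicit Arguments. Unset Strict Implicit. Unset Printing Implicit Defensive.

Definition bit (x : seq bool) (t : nat) : bool := nth false x (t %% size x).

Definition inX (n k : nat) (x : seq bool) : bool :=
  (size x == n) && (count id x == k).

Definition kadj (a b : seq bool) : bool :=
  all (fun t => ~~ (nth false a t && nth false b t)) (iota 0 (size a)).

Definition four_cycle (n k : nat) (a b c d : seq bool) : Prop :=
  [/\ inX n k a, inX n k b, inX n k c & inX n k d] /\
  uniq [:: a; b; c; d] /\
  [/\ kadj a b, kadj b c, kadj c d & kadj d a].

Definition sigma (i : nat) (z : seq bool) : seq bool := rotr (i %% size z) z.

Definition ones_from (x : seq bool) (i L : nat) : nat :=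
  count id (map (fun t => bit x (i + t)) (iota 0 L)).

Definition balanced (x : seq bool) (i L : nat) : bool :=
  (ones_from x i L).*2 == L.

(* cyclic parenthesis matching: the 1 at position i is matched to the 0 at
   position j (both positions < size x) *)
Definition mpair (x : seq bool) (i j : nat) : bool :=
  [&& i < size x, j < size x, bit x i &
   has (fun L =>
     [&& j == (i + L - 1) %% size x, balanced x i L &
         all (fun L' => ~~ balanced x i L') (iota 1 L.-1)])
     (iota 1 (size x))].

Definition matched (x : seq bool) (j : nat) : bool :=
  has (fun i => mpair x i j || mpair x j i) (iota 0 (size x)).

Definition f (x : seq bool) : seq bool :=
  mkseq (fun j => if matched x j then ~~ nth false x j else nth false x j) (size x).

Definition in_cint (n a b p : nat) : bool :=
  (p + n - a) %% n <= (b + n - a) %% n.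

Definition visible (x : seq bool) (i j : nat) : bool :=
  mpair x i j &&
  ~~ has (fun i' => has (fun j' =>
        [&& mpair x i' j', (i', j') != (i, j),
            in_cint (size x) i' j' i & in_cint (size x) i' j' j])
        (iota 0 (size x))) (iota 0 (size x)).

Definition dyck (u : seq bool) : bool :=
  ((count id u).*2 == size u) &&
  all (fun t => count negb (take t u) <= count id (take t u)) (iota 0 (size u).+1).

Definition connector (x y : seq bool) : Prop :=
  exists (i : nat) (u w p q r : seq bool),
    [/\ dyck u, dyck w,
        x = sigma i (p ++ true :: u ++ false :: q ++ false :: w ++ false :: r),
        y = sigma i (p ++ false :: u ++ false :: q ++ true :: w ++ false :: r) &
        let n := size x in
        let a := size p in
        let b := a + 1 + size u in
        let c := b + 1 + size q in
        let d := c + 1 + size w in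
        [/\ visible x ((a + i) %% n) ((b + i) %% n),
            ~~ matched x ((c + i) %% n) &
            ~~ matched x ((d + i) %% n)]].

From mathcomp Require Import all_boot zify.
Set Implicit Arguments. Unset Strict Implicit. Unset Printing Implicit Defensive.

(* The string [y] arises from [x] by moving the 1 that opens the visible pair
   (A, B) to the unmatched 0 at C, while D, the 0 after [w], is unmatched in
   [x] and matched with C in [y].  Since [f] complements the matched bits, the
   1s of [f x] are exactly the closing 0s of [x]; this gives [x ∩ f x = ∅]
   directly and [f x ∩ y = ∅] because C is unmatched in [x].  The heart of the
   proof is [f y ∩ x = ∅], i.e. that A does not close a bracket of [y]: its
   partner cannot lie between A and C (the segment of [x] from there to C would
   be heavy, so C would be matched in [x]), nor at C (matched with D), nor
   beyond C (the bracket of [x] opening there would enclose the visible pair).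
   The bits at A, C and D separate the four strings, and [f] preserves the
   number of 1s because for 2k < n the matching pairs every 1 with a distinct
   closing 0. *)

(** * Cyclic positions *)

Section CyclicBits.
Variable x : seq bool.

Lemma bit_eqmod s t : s = t %[mod size x] -> bit x s = bit x t.
Proof. by rewrite /bit => ->. Qed.

Lemma bit_mod t : bit x (t %% size x) = bit x t.
Proof. by apply: bit_eqmod; rewrite modn_mod. Qed.

Lemma bit_addn t : bit x (t + size x) = bit x t.
Proof. by apply: bit_eqmod; rewrite modnDr. Qed.

Lemma bit_nth t : t < size x -> bit x t = nth false x t.
Proof. by move=> lt_t; rewrite /bit modn_small. Qed.

Lemma ones_fromS i L : ones_from x i L.+1 = ones_from x i L + bit x (i + L).
Proof. by rewrite /ones_from -addn1 iotaD map_cat count_cat /= add0n addn0. Qed.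

Lemma ones_from1 i : ones_from x i 1 = bit x i.
Proof. by rewrite ones_fromS addn0. Qed.

Lemma ones_fromD i L1 L2 :
  ones_from x i (L1 + L2) = ones_from x i L1 + ones_from x (i + L1) L2.
Proof.
elim: L2 => [|L2 IH]; first by rewrite addn0 [ones_from _ _ 0]/ones_from addn0.
by rewrite addnS !ones_fromS IH !addnA.
Qed.

Lemma ones_from_le i L : ones_from x i L <= L.
Proof.
by rewrite /ones_from (leq_trans (count_size _ _)) // size_map size_iota.
Qed.

Lemma ones_from_eqmod i j L : i = j %[mod size x] -> ones_from x i L = ones_from x j L.
Proof.
move=> eq_ij; congr count; apply: eq_map => t; apply: bit_eqmod.
by rewrite -modnDml eq_ij modnDml.
Qed.

Lemma ones_from_size i : ones_from x i (size x) = count id x.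
Proof.
have ones0 : ones_from x 0 (size x) = count id x.
  rewrite /ones_from -[in RHS](mkseq_nth false x) /mkseq !count_map.
  by apply: eq_in_count => t; rewrite mem_iota add0n => /andP[_ /bit_nth /= ->].
have := ones_fromD 0 (size x) i; rewrite addnC ones_fromD add0n ones0.
by rewrite (@ones_from_eqmod (size x) 0) ?modnn ?mod0n //; lia.
Qed.

End CyclicBits.

Lemma eq_ones_from x y i L :
  (forall t, t < L -> bit x (i + t) = bit y (i + t)) ->
  ones_from x i L = ones_from y i L.
Proof.
move=> eq_xy; congr count; apply/eq_in_map => t.
by rewrite mem_iota add0n => /andP[_ /eq_xy].
Qed.

Lemma ones_from_take x i (v : seq bool) t :
  (forall o, o < t -> bit x (i + o) = nth false v o) -> t <= size v ->
  ones_from x i t = count id (take t v).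
Proof.
move=> eq_xv le_t; rewrite /ones_from -(map_nth_iota0 false) //; congr count.
by apply/eq_in_map => o; rewrite mem_iota add0n => /andP[_ /eq_xv].
Qed.

Lemma bit_rot (s : seq bool) r t : r <= size s -> bit (rot r s) t = bit s (t + r).
Proof.
move=> le_r; have [s0|s_gt0] := posnP (size s).
  by rewrite /bit size_rot s0 !modn0 !nth_default ?size_rot ?s0.
rewrite /bit size_rot /rot nth_cat size_drop -modnDml.
set t' := t %% size s; have lt_t : t' < size s by rewrite ltn_mod.
case: ifP => [lt_ts|ge_ts].
  by rewrite nth_drop modn_small; [congr nth; lia | lia].
rewrite nth_take; last lia.
have -> : t' + r = t' + r - size s + size s by lia.
by rewrite modnDr modn_small; [congr nth; lia | lia].
Qed.

Lemma bit_rotr (z : seq bool) r t : r <= size z -> bit (rotr r z) (t + r) = bit z t.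
Proof.
move=> le_r; rewrite /rotr bit_rot ?leq_subr //.
by rewrite -addnA subnKC // bit_addn.
Qed.

Lemma bit_sigma (z : seq bool) i t : bit (sigma i z) (t + i) = bit z t.
Proof.
case: z => [|b z]; first by rewrite /bit /sigma /= !nth_nil.
have le_r : i %% size (b :: z) <= size (b :: z) by rewrite ltnW // ltn_mod.
rewrite /sigma -(bit_rotr t le_r).
by apply: bit_eqmod; rewrite size_rotr modnDmr.
Qed.

Lemma bit_sigma_cat i (p s : seq bool) o :
  bit (sigma i (p ++ s)) (size p + i + o) = bit (s ++ p) o.
Proof.
rewrite -(rot_size_cat p s) bit_rot ?size_cat ?leq_addr // -(bit_sigma (p ++ s) i).
by rewrite [size p + i + o]addnC addnA.
Qed.

Lemma offset_exists A t n : A < n -> t < n -> exists2 o, o < n & t = (A + o) %% n.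
Proof.
move=> lt_A lt_t; have [le_At|lt_tA] := leqP A t.
  by exists (t - A); [lia | rewrite subnKC // modn_small].
exists (t + n - A); first lia.
by rewrite subnKC ?modnDr ?modn_small //; lia.
Qed.

Lemma offset_mod a t n : a < n -> t < n -> ((a + t) %% n + n - a) %% n = t.
Proof.
move=> lt_a lt_t; have [lt_at|ge_at] := ltnP (a + t) n.
  by rewrite (modn_small lt_at) (_ : a + t + n - a = t + n) ?modnDr ?modn_small //; lia.
by rewrite {1}(_ : a + t = a + t - n + n) ?modnDr ?modn_small; lia.
Qed.

Lemma closing_length A s L n : A < n -> 0 < s < n -> 0 < L <= n ->
  ((A + s) %% n + L - 1) %% n = A -> L = (n - s).+1.
Proof.
move=> lt_A range_s range_L ends_at_A.
have : (A + (s + (L - 1))) %% n = (A + 0) %% n.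
  by rewrite addn0 (modn_small lt_A) -[in RHS]ends_at_A -addnBA ?modnDml ?addnA //; lia.
move/eqP; rewrite eqn_modDl mod0n => /eqP wraps.
have [lt_n|ge_n] := ltnP (s + (L - 1)) n; first by rewrite modn_small in wraps; lia.
rewrite (_ : s + (L - 1) = s + (L - 1) - n + n) ?modnDr ?modn_small in wraps; lia.
Qed.

(** * Matched brackets *)

(* [closes_after x s L]: the walk that starts with the 1 at position [s] first
   becomes balanced after [L] bits, i.e. that 1 is matched with the 0 at
   position [s + L - 1] (see [mpair_closes]). *)
Definition closes_after (x : seq bool) (s L : nat) : Prop :=
  [/\ bit x s, 0 < L, (ones_from x s L).*2 = L &
      forall L', 0 < L' < L -> L' < (ones_from x s L').*2].

Lemma closes_after_eqmod x s1 s2 L :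
  s1 = s2 %[mod size x] -> closes_after x s1 L -> closes_after x s2 L.
Proof.
move=> eq_s [b1 L_gt0 bal pos]; split=> //.
- by rewrite -(bit_eqmod eq_s).
- by rewrite -(ones_from_eqmod L eq_s).
- by move=> L' /pos; rewrite (ones_from_eqmod L' eq_s).
Qed.

Lemma closes_after_uniq x s L1 L2 :
  closes_after x s L1 -> closes_after x s L2 -> L1 = L2.
Proof.
move=> [_ L1_gt0 bal1 pos1] [_ L2_gt0 bal2 pos2].
case: (ltngtP L1 L2) => // lt_L.
  by have := pos2 L1; rewrite L1_gt0 lt_L bal1 ltnn => /(_ isT).
by have := pos1 L2; rewrite L2_gt0 lt_L bal2 ltnn => /(_ isT).
Qed.

Lemma closes_after_last0 x s L : closes_after x s L -> bit x (s + L.-1) = false.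
Proof.
case=> b_s L_gt0 bal pos; have L_gt1 : 1 < L.
  by case: L L_gt0 bal {pos} => [|[|L]] //; rewrite ones_from1 b_s.
have := pos L.-1 ltac:(lia); have := ones_fromS x s L.-1; rewrite prednK //.
by case: (bit x (s + L.-1)) => //= ?; lia.
Qed.

Lemma closes_after_prefix x s L t : closes_after x s L -> t <= L ->
  t <= (ones_from x s t).*2.
Proof.
case=> _ _ bal pos le_t; have [->|t_gt0] := posnP t; first by [].
by have [->|lt_t] := eqVneq t L; [rewrite bal | apply/ltnW/pos; rewrite t_gt0 ltn_neqAle lt_t].
Qed.

Lemma closes_after_exists x s L : bit x s -> 0 < L -> (ones_from x s L).*2 <= L ->
  exists2 L0, L0 <= L & closes_after x s L0.
Proof.
move=> b_s L_gt0 light.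
have ex : exists m, (0 < m) && ((ones_from x s m).*2 <= m) by exists L; rewrite L_gt0.
case: (ex_minnP ex) => m /andP[m_gt0 light_m] min_m.
have pos : forall L', 0 < L' < m -> L' < (ones_from x s L').*2.
  move=> L' /andP[L'_gt0 lt_L']; rewrite ltnNge; apply/negP => light'.
  by have := min_m L'; rewrite L'_gt0 light' => /(_ isT); rewrite leqNgt lt_L'.
exists m; first by apply: min_m; rewrite L_gt0.
split=> //; have m_gt1 : 1 < m.
  by case: m m_gt0 light_m {min_m pos} => [|[|m]] //; rewrite ones_from1 b_s.
have := pos m.-1 ltac:(lia); have := ones_fromS x s m.-1; rewrite prednK //.
have := ones_from_le x s m.-1.
by case: (bit x (s + m.-1)) => /= ???; lia.
Qed.

Lemma closes_after_count x s : (count id x).*2 < size x -> bit x s ->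
  exists2 L, L <= size x & closes_after x s L.
Proof.
move=> few b_s; apply: closes_after_exists; rewrite ?ones_from_size //; lia.
Qed.

Lemma closes_after_dyck x s u : dyck u ->
  (forall o, o < (size u).+2 -> bit x (s + o) = nth false (true :: rcons u false) o) ->
  closes_after x s (size u).+2.
Proof.
case/andP=> /eqP bal_u /allP prefix_u bits.
have ones t : t <= (size u).+2 -> ones_from x s t = count id (take t (true :: rcons u false)).
  move=> le_t; apply: ones_from_take => [o lt_o|]; last by rewrite /= size_rcons.
  by rewrite bits //; lia.
split=> //; first by rewrite -(addn0 s) bits.
  by rewrite ones // take_oversize /= ?size_rcons // -cats1 count_cat /=; lia.
move=> [|t] // /andP[_]; rewrite ltnS ltnS => le_t.
rewrite ones /=; last by rewrite !ltnS ltnW.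
rewrite -cats1 takel_cat //.
have := prefix_u t; rewrite mem_iota add0n ltnS => /(_ le_t).
have := count_predC id (take t u); rewrite size_take_min (minn_idPl le_t).
rewrite (@eq_count _ (predC id) negb) //; lia.
Qed.

Lemma mpair_closes x i j : mpair x i j ->
  [/\ i < size x, j < size x &
   exists L, [/\ 0 < L <= size x, closes_after x i L & j = (i + L - 1) %% size x]].
Proof.
case/and4P=> lt_i lt_j b_i /hasP[L]; rewrite mem_iota => /andP[L_gt0 le_L].
case/and3P=> /eqP def_j /eqP bal /allP unbal; split=> //; exists L.
split=> //; first lia.
split=> // L' /andP[L'_gt0 lt_L']; rewrite ltnNge; apply/negP => light.
have [L0 le_L0 [_ L0_gt0 bal0 _]] := closes_after_exists b_i L'_gt0 light.
by have := unbal L0; rewrite mem_iota /balanced bal0 eqxx => /(_ ltac:(lia)).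
Qed.

Lemma closes_after_mpair x s L : L <= size x -> closes_after x s L ->
  mpair x (s %% size x) ((s + L - 1) %% size x).
Proof.
move=> le_L [b_s L_gt0 bal pos]; have x_gt0 : 0 < size x by lia.
have ones_mod L' : ones_from x (s %% size x) L' = ones_from x s L'.
  by apply: ones_from_eqmod; rewrite modn_mod.
apply/and4P; split; rewrite ?ltn_mod ?bit_mod //.
apply/hasP; exists L; first by rewrite mem_iota; lia.
apply/and3P; split.
- by rewrite -!addnBA // modnDml.
- by rewrite /balanced ones_mod bal.
- apply/allP => L'; rewrite mem_iota /balanced ones_mod => range_L'.
  by have := pos L' ltac:(lia); lia.
Qed.

Lemma mpair_fun x i j1 j2 : mpair x i j1 -> mpair x i j2 -> j1 = j2.
Proof.
case/mpair_closes=> _ _ [L1 [_ cl1 ->]]; case/mpair_closes=> _ _ [L2 [_ cl2 ->]].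
by rewrite (closes_after_uniq cl1 cl2).
Qed.

(* Of two brackets ending at the same place, the shorter one is a balanced
   suffix of the longer one, which contradicts the minimality of the latter. *)
Lemma closes_after_same_end x i1 i2 L1 L2 : i1 < size x -> i2 < size x ->
  L1 <= L2 <= size x -> closes_after x i1 L1 -> closes_after x i2 L2 ->
  (i1 + L1 - 1) %% size x = (i2 + L2 - 1) %% size x -> i1 = i2.
Proof.
move=> lt_i1 lt_i2 le_L [_ L1_gt0 bal1 _] [_ _ bal2 pos2] same_end.
have eq_start : i2 + (L2 - L1) = i1 %[mod size x].
  apply/eqP; rewrite -(eqn_modDr (L1 - 1)); apply/eqP.
  have -> : i2 + (L2 - L1) + (L1 - 1) = i2 + L2 - 1 by lia.
  by have -> : i1 + (L1 - 1) = i1 + L1 - 1 by lia.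
have := ones_fromD x i2 (L2 - L1) L1; rewrite subnK; last lia.
rewrite (ones_from_eqmod L1 eq_start) => split_L2.
have [eq_L|lt_L] := posnP (L2 - L1).
  by move: eq_start; rewrite eq_L addn0 !modn_small.
have := pos2 (L2 - L1); clear -split_L2 bal1 bal2 lt_L le_L L1_gt0; lia.
Qed.

Lemma mpair_inj x i1 i2 j : mpair x i1 j -> mpair x i2 j -> i1 = i2.
Proof.
case/mpair_closes=> lt_i1 _ [L1 [range1 cl1 ->]].
case/mpair_closes=> lt_i2 _ [L2 [range2 cl2 same_end]].
have [le_L|lt_L] := leqP L1 L2.
  by apply: (closes_after_same_end lt_i1 lt_i2 _ cl1 cl2) => //; lia.
by apply/esym/(closes_after_same_end lt_i2 lt_i1 _ cl2 cl1) => //; lia.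
Qed.

Definition closer (x : seq bool) (j : nat) : bool :=
  has (fun i => mpair x i j) (iota 0 (size x)).

Lemma closerP x j : reflect (exists i, mpair x i j) (closer x j).
Proof.
apply: (iffP hasP) => [[i _ m]|[i m]]; first by exists i.
by exists i => //; case/mpair_closes: m => lt_i _ _; rewrite mem_iota.
Qed.

Lemma mpair_bitr x i j : mpair x i j -> bit x j = false.
Proof.
case/mpair_closes=> _ _ [L [_ cl ->]]; rewrite bit_mod.
have [_ L_gt0 _ _] := cl; have -> : i + L - 1 = i + L.-1 by lia.
exact: closes_after_last0.
Qed.

Lemma closer_bit x j : closer x j -> bit x j = false.
Proof. by case/closerP=> i /mpair_bitr. Qed.

Lemma closer_matched x j : closer x j -> matched x j.
Proof.
case/closerP=> i m; apply/hasP; exists i; last by rewrite m.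
by case/mpair_closes: m => lt_i _ _; rewrite mem_iota.
Qed.

(* A 0 ending a segment in which at least half of the bits are 1s closes a
   bracket: the shortest such suffix is one. *)
Lemma closer_heavy x s L : bit x (s + L - 1) = false -> 0 < L <= size x ->
  L <= (ones_from x s L).*2 -> closer x ((s + L - 1) %% size x).
Proof.
move=> b_end /andP[L_gt0 le_L] heavy.
pose W m := ones_from x (s + L - m) m.
have ex : exists m, (0 < m) && (m <= (W m).*2) by exists L; rewrite L_gt0 /W addnK.
case: (ex_minnP ex) => m /andP[m_gt0 heavy_m] min_m.
have le_mL : m <= L by apply: min_m; rewrite L_gt0 /W addnK.
have m_gt1 : 1 < m.
  by case: m m_gt0 heavy_m {min_m le_mL} => [|[|m]] //; rewrite /W ones_from1 b_end.
pose s0 := s + L - m.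
have W_split L' : L' <= m -> W m = ones_from x s0 L' + W (m - L').
  move=> le_L'; rewrite /W; have -> : s + L - (m - L') = s0 + L' by rewrite /s0; lia.
  by rewrite -ones_fromD subnKC.
have light m' : 0 < m' < m -> (W m').*2 < m'.
  move=> /andP[m'_gt0 lt_m']; rewrite ltnNge; apply/negP => heavy'.
  by have := min_m m'; rewrite m'_gt0 heavy' => /(_ isT); rewrite leqNgt lt_m'.
have split1 := W_split 1 (ltnW m_gt1); rewrite ones_from1 in split1.
have light1 := light (m - 1) ltac:(lia).
have b_s0 : bit x s0.
  by move: split1 light1 heavy_m; case: (bit x s0) => // ->; lia.
have W_m : W m = (W (m - 1)).+1 by rewrite split1 b_s0.
have cl : closes_after x s0 m.
  split=> //; first by change ((W m).*2 = m); move: light1 heavy_m; rewrite W_m; lia.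
  move=> L' /andP[L'_gt0 lt_L']; have := W_split L' (ltnW lt_L').
  by have := light (m - L') ltac:(lia); move: light1 heavy_m; rewrite W_m; lia.
have := closes_after_mpair (leq_trans le_mL le_L) cl.
have -> : s0 + m - 1 = s + L - 1 by rewrite /s0; lia.
by move=> m0; apply/closerP; exists (s0 %% size x).
Qed.

(* the partner of the 1 at [i] (a junk value if there is none) *)
Definition partner (x : seq bool) (i : nat) : nat :=
  nth 0 (iota 0 (size x)) (find (mpair x i) (iota 0 (size x))).

Lemma mpair_partner x i : (count id x).*2 < size x -> i < size x -> bit x i ->
  mpair x i (partner x i).
Proof.
move=> few lt_i b_i; apply: (nth_find 0); apply/hasP.
have [L le_L cl] := closes_after_count few b_i.
exists ((i + L - 1) %% size x); first by rewrite mem_iota ltn_mod; lia.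
by have := closes_after_mpair le_L cl; rewrite modn_small.
Qed.

Lemma matched_closer x j : (count id x).*2 < size x -> j < size x ->
  matched x j = bit x j || closer x j.
Proof.
move=> few lt_j; case b_j: (bit x j) => /=.
  apply/hasP; exists (partner x j); last by rewrite mpair_partner ?orbT.
  by case/mpair_closes: (mpair_partner few lt_j b_j) => _ ? _; rewrite mem_iota.
apply: eq_has => i /=; suff -> : mpair x j i = false by rewrite orbF.
by apply/negbTE/negP => /and4P[_ _]; rewrite b_j.
Qed.

(** * The map [f] and Kneser adjacency *)

Lemma size_f x : size (f x) = size x.
Proof. by rewrite size_mkseq. Qed.

Lemma nth_f x j : (count id x).*2 < size x -> j < size x ->
  nth false (f x) j = closer x j.
Proof.
move=> few lt_j; rewrite /f nth_mkseq // (matched_closer few lt_j) -bit_nth //.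
case b_j: (bit x j) => /=; last by case: (closer x j).
by apply/esym/negbTE/negP => /closer_bit; rewrite b_j.
Qed.

Lemma count_f x : (count id x).*2 < size x -> count id (f x) = count id x.
Proof.
move=> few; set I := iota 0 (size x).
have count_fx : count id (f x) = count (closer x) I.
  rewrite /f /mkseq count_map; apply: eq_in_count => j.
  by rewrite mem_iota add0n => /andP[_ lt_j]; rewrite /= -nth_f ?nth_mkseq.
have count_x : count id x = count (bit x) I.
  rewrite -{1}(mkseq_nth false x) /mkseq count_map; apply: eq_in_count => j.
  by rewrite mem_iota add0n => /andP[_ /bit_nth ->].
have ones_partner i : i \in [seq i <- I | bit x i] -> mpair x i (partner x i).
  by rewrite mem_filter mem_iota add0n => /andP[b_i /andP[_ lt_i]]; exact: mpair_partner.
rewrite count_fx count_x -!size_filter -[in RHS](size_map (partner x)).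
apply/perm_size/uniq_perm; rewrite ?filter_uniq ?iota_uniq //.
  rewrite map_inj_in_uniq ?filter_uniq ?iota_uniq // => i1 i2 /ones_partner m1.
  by move=> /ones_partner m2 eq_p; apply: (mpair_inj m1); rewrite eq_p.
move=> j; rewrite mem_filter; apply/andP/mapP => [[/closerP[i m] _]|[i /ones_partner m ->]].
  case/mpair_closes: (m) => lt_i _ [L [_ [b_i _ _ _] _]].
  have oi : i \in [seq i <- I | bit x i] by rewrite mem_filter mem_iota b_i.
  by exists i => //; apply: mpair_fun m (ones_partner _ oi).
by split; [apply/closerP; exists i | case/mpair_closes: m => _ ? _; rewrite mem_iota].
Qed.

Lemma inX_f n k x : k.*2 < n -> inX n k x -> inX n k (f x).
Proof.
move=> few /andP[/eqP size_x /eqP count_x].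
by rewrite /inX size_f size_x eqxx count_f ?size_x count_x ?eqxx.
Qed.

Lemma neq_nth (a b : seq bool) t : nth false a t != nth false b t -> a != b.
Proof. by apply: contraNneq => ->. Qed.

Lemma kadjP a b :
  reflect (forall t, t < size a -> ~~ (nth false a t && nth false b t)) (kadj a b).
Proof.
apply: (iffP allP) => disj t; first by move=> lt_t; apply: disj; rewrite mem_iota.
by rewrite mem_iota add0n => /andP[_ /disj].
Qed.

Lemma kadjC a b : size a = size b -> kadj a b = kadj b a.
Proof.
move=> eq_size; apply/kadjP/kadjP => disj t lt_t; rewrite andbC; apply: disj.
  by rewrite eq_size.
by rewrite -eq_size.
Qed.

Lemma kadj_f x y : (count id x).*2 < size x ->
  (forall j, j < size x -> closer x j -> nth false y j = false) -> kadj (f x) y.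
Proof.
move=> few no_closer; apply/kadjP => t; rewrite size_f => lt_t.
by rewrite nth_f //; case c_t: (closer x t); rewrite // no_closer.
Qed.

Lemma kadj_f_self x : (count id x).*2 < size x -> kadj (f x) x.
Proof. by move=> few; apply: kadj_f => // j /bit_nth <- /closer_bit. Qed.

Lemma four_cycle_rot2 n k a b c d : four_cycle n k c d a b -> four_cycle n k a b c d.
Proof.
case=> [[ia ib ic id] [uniq_cycle [ab bc cd da]]]; split; first by split.
by split; [rewrite -(rot_uniq 2) | split].
Qed.

(** * Connectors *)

Lemma nth_cat_mid T x0 (s1 s2 s3 : seq T) o : o < size s2 ->
  nth x0 (s1 ++ s2 ++ s3) (size s1 + o) = nth x0 s2 o.
Proof. by move=> lt_o; rewrite nth_cat ltnNge leq_addr addKn nth_cat lt_o. Qed.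

Lemma nth_two_holes (M R : seq bool) b1 b2 b1' b2' o :
  o != 0 -> o != (size M).+1 ->
  nth false (b1 :: M ++ b2 :: R) o = nth false (b1' :: M ++ b2' :: R) o.
Proof.
case: o => // o _; rewrite eqSS /= !nth_cat => ne_o.
case: ifP => // /negbT; rewrite -leqNgt => ge_o.
by case E: (o - size M) => [|j] //; move: ne_o; rewrite -(subnKC ge_o) E addn0 eqxx.
Qed.

Section ConnectorCycle.

(* Positions are offsets from [A]: the displayed 1 of the connector sits at
   [A] and its three displayed 0s at [A + oB], [A + oC] and [A + oD]. *)
Variables (n k : nat) (x y : seq bool) (A oB oC oD : nat).
Hypotheses (size_x : size x = n) (size_y : size y = n).
Hypotheses (count_x : count id x = k) (count_y : count id y = k) (few : k.*2 < n).
Hypotheses (lt_A : A < n) (lt_BC : oB < oC) (lt_CD : oC < oD) (lt_D : oD < n).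
Hypotheses (x_A : bit x A) (y_A : bit y A = false).
Hypotheses (x_C : bit x (A + oC) = false) (y_C : bit y (A + oC)).
Hypothesis xy_agree :
  forall o, o < n -> o != 0 -> o != oC -> bit x (A + o) = bit y (A + o).
Hypothesis closes_x_A : closes_after x A oB.+1.
Hypothesis closes_y_C : closes_after y (A + oC) (oD - oC).+1.
Hypothesis visible_AB : visible x A ((A + oB) %% n).
Hypotheses (unmatched_C : ~~ matched x ((A + oC) %% n))
           (unmatched_D : ~~ matched x ((A + oD) %% n)).

Let few_x : (count id x).*2 < size x. Proof. by rewrite count_x size_x. Qed.
Let few_y : (count id y).*2 < size y. Proof. by rewrite count_y size_y. Qed.

Lemma nth_offset z o : size z = n -> nth false z ((A + o) %% n) = bit z (A + o).
Proof.
by move=> size_z; rewrite -size_z -bit_nth ?bit_mod // ltn_mod size_z; lia.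
Qed.

Lemma bit_offset z o : size z = n -> bit z ((A + o) %% n) = bit z (A + o).
Proof. by move=> <-; rewrite bit_mod. Qed.

Lemma offset0 s : s < n -> (A + s) %% n = A -> s = 0.
Proof. by move=> lt_s eq_A; have := offset_mod lt_A lt_s; rewrite eq_A addKn modnn. Qed.

Lemma mpair_y_CD : mpair y ((A + oC) %% n) ((A + oD) %% n).
Proof.
have := closes_after_mpair _ closes_y_C; rewrite size_y.
by rewrite (_ : A + oC + (oD - oC).+1 - 1 = A + oD); [apply; lia | lia].
Qed.

Lemma no_y_partner_at_C : ~ closes_after y (A + oC) (n - oC).+1.
Proof. by move=> cl; have := closes_after_uniq cl closes_y_C; lia. Qed.

(* The partner of [A] in [y] cannot lie strictly between [A] and [C]: in [x]
   the segment from it up to [C] would then be heavy, so [C] would be matched. *)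
Lemma no_y_partner_before_C s : 0 < s < oC -> ~ closes_after y (A + s) (n - s).+1.
Proof.
move=> range_s [_ _ _ pos_y].
have same_seg : ones_from x (A + s) (oC - s) = ones_from y (A + s) (oC - s).
  by apply: eq_ones_from => t lt_t; rewrite -!addnA xy_agree //; lia.
have end_C : A + s + (oC - s) = A + oC by lia.
have heavy : (oC - s).+1 <= (ones_from x (A + s) (oC - s).+1).*2.
  rewrite ones_fromS end_C x_C addn0 same_seg.
  by have := pos_y (oC - s); clear -range_s lt_D lt_CD; lia.
have := closer_heavy _ _ heavy; rewrite size_x -addnBA // subn1 /= end_C.
by move=> /(_ x_C ltac:(lia)) /closer_matched; rewrite (negbTE unmatched_C).
Qed.

Lemma x_bracket_after_C s L : oC < s < n ->
  closes_after y (A + s) (n - s).+1 -> closes_after x (A + s) L -> (n - s) + oB.+1 < L.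
Proof.
move=> range_s [_ _ bal_y pos_y] [_ L_gt0 bal_x _].
have same_seg t : t <= n - s -> ones_from x (A + s) t = ones_from y (A + s) t.
  by move=> le_t; apply: eq_ones_from => t' lt_t'; rewrite -!addnA xy_agree //; lia.
have wraps : A + s + (n - s) = A + size y by rewrite size_y; lia.
have y_seg : (ones_from y (A + s) (n - s)).*2 = (n - s).+1.
  by move: bal_y; rewrite ones_fromS wraps bit_addn y_A addn0.
have x_seg t : ones_from x (A + s) (n - s + t) = ones_from y (A + s) (n - s) + ones_from x A t.
  rewrite ones_fromD same_seg // wraps; congr (_ + _); apply: ones_from_eqmod.
  by rewrite size_x -size_y modnDr.
rewrite ltnNge; apply/negP => short.
have [le_L|gt_L] := leqP L (n - s).
  by have := pos_y L; rewrite -same_seg //; clear -bal_x le_L L_gt0; lia.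
have [t def_L] : exists t, L = n - s + t by exists (L - (n - s)); lia.
rewrite def_L x_seg in bal_x; rewrite def_L in gt_L short.
have := @closes_after_prefix x A oB.+1 t closes_x_A ltac:(lia).
by clear -bal_x y_seg gt_L; lia.
Qed.

(* Nor can it lie beyond [C]: the bracket of [x] opening there would enclose
   the visible pair [(A, B)]. *)
Lemma no_y_partner_after_C s : oC < s < n -> ~ closes_after y (A + s) (n - s).+1.
Proof.
move=> range_s cl_y; have [y_s _ _ _] := cl_y.
have x_s : bit x (A + s) by rewrite xy_agree //; lia.
have [L le_L cl_x] := closes_after_count few_x x_s.
have long := x_bracket_after_C range_s cl_y cl_x.
have [_ L_gt0 _ _] := cl_x.
have [lt_sn lt_L1 lt_A' lt_B'] :
    [/\ s < n, L - 1 < n, n - s < L - 1 & n - s + oB < L - 1] by split; lia.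
have [lt_An lt_Bn] : n - s < n /\ n - s + oB < n by split; lia.
have [end_A end_B end_L] : [/\ A + s + (n - s) = A + n,
    A + s + (n - s + oB) = A + oB + n & A + s + L - 1 = A + s + (L - 1)].
  by split; lia.
have pair_x := closes_after_mpair le_L cl_x; rewrite size_x end_L in pair_x.
set i' := (A + s) %% n in pair_x.
have lt_i' : i' < n by rewrite ltn_mod (leq_ltn_trans _ lt_A).
have shift t : (A + s + t) %% n = (i' + t) %% n by rewrite modnDml.
rewrite shift in pair_x; set j' := (i' + (L - 1)) %% n in pair_x *.
have def_A : A = (i' + (n - s)) %% n by rewrite -shift end_A modnDr modn_small.
have def_B : (A + oB) %% n = (i' + (n - s + oB)) %% n by rewrite -shift end_B modnDr.
have ne_A : i' != A.
  by apply/eqP => /(offset0 lt_sn) s0; move: range_s; rewrite s0 ltn0.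
have encloses p : p < L - 1 -> p < n -> in_cint n i' j' ((i' + p) %% n).
  by move=> lt_p lt_pn; rewrite /in_cint !offset_mod // ltnW.
move: visible_AB => /andP[_ /negP]; apply; apply/hasP.
exists i'; first by rewrite mem_iota size_x.
apply/hasP; exists j'; first by rewrite mem_iota size_x ltn_mod (leq_ltn_trans _ lt_A).
rewrite size_x pair_x /= xpair_eqE negb_and ne_A /=.
by rewrite def_B {1}def_A !encloses.
Qed.

Lemma not_closer_y_A : ~~ closer y A.
Proof.
apply/closerP => -[i]; case/mpair_closes; rewrite size_y => lt_i _ [L [range_L cl ends_A]].
have [s lt_s def_i] := offset_exists lt_A lt_i.
have s_gt0 : 0 < s.
  have [y_i _ _ _] := cl; rewrite lt0n; apply/eqP => s0.
  by move: y_i; rewrite def_i s0 addn0 modn_small // y_A.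
have := closing_length lt_A (introT andP (conj s_gt0 lt_s)) range_L.
rewrite -def_i => /(_ (esym ends_A)) def_L; subst L.
have cl_s : closes_after y (A + s) (n - s).+1.
  by apply: closes_after_eqmod cl; rewrite def_i size_y modn_mod.
have [lt_sC|lt_Cs|eq_sC] := ltngtP s oC.
- by apply: no_y_partner_before_C cl_s; rewrite s_gt0.
- by apply: no_y_partner_after_C cl_s; rewrite lt_Cs.
- by rewrite eq_sC in cl_s; exact: no_y_partner_at_C.
Qed.

Lemma kadj_fx_y : kadj (f x) y.
Proof.
apply: (kadj_f few_x) => j; rewrite size_x => lt_j c_j.
have [o lt_o def_j] := offset_exists lt_A lt_j.
have := closer_bit c_j; rewrite def_j bit_offset // nth_offset // => x_o.
have [o0|o_ne0] := eqVneq o 0; first by rewrite o0 addn0 x_A in x_o.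
have [oC_eq|o_neC] := eqVneq o oC.
  by move: unmatched_C; rewrite -oC_eq -def_j closer_matched.
by rewrite -xy_agree.
Qed.

Lemma kadj_fy_x : kadj (f y) x.
Proof.
apply: (kadj_f few_y) => j; rewrite size_y => lt_j c_j.
have [o lt_o def_j] := offset_exists lt_A lt_j.
have := closer_bit c_j; rewrite def_j bit_offset // nth_offset // => y_o.
have [o0|o_ne0] := eqVneq o 0.
  by move: not_closer_y_A; rewrite -(modn_small lt_A) -[A]addn0 -o0 -def_j c_j.
have [oC_eq|o_neC] := eqVneq o oC; first by rewrite oC_eq.
by rewrite xy_agree.
Qed.

Lemma uniq_cycle : uniq [:: x; f x; y; f y].
Proof.
pose at_ z o := nth false z ((A + o) %% n).
have at_bit z o : size z = n -> at_ z o = bit z (A + o) by move=> ?; rewrite /at_ nth_offset.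
have at_f z o : size z = n -> (count id z).*2 < size z -> at_ (f z) o = closer z ((A + o) %% n).
  by move=> size_z few_z; rewrite /at_ nth_f // size_z ltn_mod; lia.
have [x0 y0] : at_ x 0 /\ at_ y 0 = false by rewrite !at_bit // addn0.
have fx0 : at_ (f x) 0 = false.
  by rewrite at_f //; apply/negP => /closer_bit; rewrite bit_offset // addn0 x_A.
have fy0 : at_ (f y) 0 = false by rewrite at_f // addn0 modn_small // (negbTE not_closer_y_A).
have [yC fxC] : at_ y oC /\ at_ (f x) oC = false.
  split; first by rewrite at_bit.
  by rewrite at_f //; apply/negP => /closer_matched; rewrite (negbTE unmatched_C).
have fyC : at_ (f y) oC = false.
  by rewrite at_f //; apply/negP => /closer_bit; rewrite bit_offset // y_C.
have [fxD fyD] : at_ (f x) oD = false /\ at_ (f y) oD.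
  split; first by rewrite at_f //; apply/negP => /closer_matched; rewrite (negbTE unmatched_D).
  by rewrite at_f //; apply/closerP; exists ((A + oC) %% n); exact: mpair_y_CD.
have differ o a b : at_ a o != at_ b o -> a != b := @neq_nth a b _.
rewrite /= !inE !negb_or !andbT; apply/and3P; split; [apply/and3P; split|apply/andP; split|].
- by apply: (differ 0); rewrite x0 fx0.
- by apply: (differ 0); rewrite x0 y0.
- by apply: (differ 0); rewrite x0 fy0.
- by apply: (differ oC); rewrite fxC yC.
- by apply: (differ oD); rewrite fxD fyD.
- by apply: (differ oC); rewrite yC fyC.
Qed.

Lemma connector_cycle : four_cycle n k x (f x) y (f y).
Proof.
have inX_x : inX n k x by rewrite /inX size_x count_x !eqxx.
have inX_y : inX n k y by rewrite /inX size_y count_y !eqxx.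
split; first by split; rewrite // inX_f.
split; first exact: uniq_cycle.
split; [rewrite kadjC ?size_f // | exact: kadj_fx_y | rewrite kadjC ?size_f //
       | exact: kadj_fy_x]; exact: kadj_f_self.
Qed.

End ConnectorCycle.

Section ConnectorWord.

Variables u q w r p : seq bool.

(* [cword true false] and [cword false true] are the two strings of a
   connector, rotated to start at the displayed 1/0 in front of [u]. *)
Definition cword (b1 b2 : bool) : seq bool :=
  b1 :: u ++ false :: q ++ b2 :: w ++ false :: r ++ p.

Lemma cword_rot b1 b2 : (b1 :: u ++ false :: q ++ b2 :: w ++ false :: r) ++ p = cword b1 b2.
Proof. by rewrite /cword -!cat_cons !catA. Qed.

Lemma size_cword b1 b2 : size (cword b1 b2) = size u + size q + size w + size r + size p + 4.
Proof. by rewrite /cword /= !size_cat /= !size_cat /= !size_cat /= size_cat; lia. Qed.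

Lemma cword_blocks b1 b2 :
  cword b1 b2 = (b1 :: rcons u false) ++ q ++ (b2 :: rcons w false) ++ r ++ p.
Proof. by rewrite /cword -!cats1 /= -!catA. Qed.

Lemma nth_cword_u b1 b2 o : o < (size u).+2 ->
  nth false (cword b1 b2) o = nth false (b1 :: rcons u false) o.
Proof. by move=> lt_o; rewrite cword_blocks nth_cat /= size_rcons lt_o. Qed.

Lemma nth_cword_w b1 b2 o : o < (size w).+2 ->
  nth false (cword b1 b2) ((size u + size q).+2 + o) = nth false (b2 :: rcons w false) o.
Proof.
move=> lt_o; rewrite cword_blocks catA.
by rewrite (_ : (size u + size q).+2 = size ((b1 :: rcons u false) ++ q)) ?nth_cat_mid //=
  ?size_rcons // size_cat /= size_rcons.
Qed.

Lemma nth_cword_agree b1 b2 b1' b2' o : o != 0 -> o != (size u + size q).+2 ->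
  nth false (cword b1 b2) o = nth false (cword b1' b2') o.
Proof.
have holes c1 c2 : cword c1 c2 = c1 :: (u ++ false :: q) ++ c2 :: w ++ false :: r ++ p.
  by rewrite /cword -catA.
move=> o_ne0 o_neC; rewrite !holes (@nth_two_holes _ _ _ _ b1' b2' _ o_ne0) //.
by rewrite size_cat /= addnS.
Qed.

End ConnectorWord.

Lemma connector_four_cycle n k x y : k.*2 < n -> inX n k x -> inX n k y ->
  connector x y -> four_cycle n k x (f x) y (f y).
Proof.
move=> few /andP[/eqP size_x /eqP count_x] /andP[/eqP size_y /eqP count_y].
case=> i [u [w [p [q [r [dyck_u dyck_w def_x def_y /= [vis unm_C unm_D]]]]]]].
rewrite size_x in vis unm_C unm_D.
set A := (size p + i) %% n; set oC := (size u + size q).+2.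
have size_cw b1 b2 : size (cword u q w r p b1 b2) = n.
  by rewrite -size_x def_x size_rotr size_cat addnC -size_cat cword_rot !size_cword.
have bit_cw z b1 b2 o : z = sigma i (p ++ b1 :: u ++ false :: q ++ b2 :: w ++ false :: r) ->
    size z = n -> o < n -> bit z (A + o) = nth false (cword u q w r p b1 b2) o.
  move=> def_z size_z lt_o; rewrite -bit_nth ?size_cw // -cword_rot -(bit_sigma_cat i p).
  by rewrite -def_z; apply: bit_eqmod; rewrite size_z modnDml.
have bit_x o := bit_cw x true false o def_x size_x.
have bit_y o := bit_cw y false true o def_y size_y.
have n_eq := size_cw true true; rewrite size_cword in n_eq.
have shift t : (size p + i + t) %% n = (A + t) %% n by rewrite modnDml.
apply: (@connector_cycle n k x y A (size u).+1 oC (oC + (size w).+1)) => //.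
- by rewrite ltn_mod; lia.
- by rewrite /oC; lia.
- by lia.
- by rewrite /oC; lia.
- by rewrite -[A]addn0 bit_x //=; lia.
- by rewrite -[A]addn0 bit_y //=; lia.
- by rewrite -[oC]addn0 bit_x ?nth_cword_w //; lia.
- by rewrite -[oC]addn0 bit_y ?nth_cword_w //; lia.
- by move=> o lt_o o_ne0 o_neC; rewrite bit_x // bit_y //; apply: nth_cword_agree.
- apply: (@closes_after_dyck x A u dyck_u) => o lt_o.
  by rewrite bit_x ?nth_cword_u //; lia.
- rewrite (_ : oC + (size w).+1 - oC = (size w).+1); last lia.
  apply: (@closes_after_dyck y (A + oC) w dyck_w) => o lt_o.
  by rewrite -addnA bit_y ?nth_cword_w //; lia.
- by move: vis; rewrite (_ : size p + 1 + size u + i = size p + i + (size u).+1) ?shift //; lia.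
- move: unm_C; rewrite (_ : size p + 1 + size u + 1 + size q + i = size p + i + oC)
    ?shift //; lia.
- move: unm_D; rewrite (_ : size p + 1 + size u + 1 + size q + 1 + size w + i
                          = size p + i + (oC + (size w).+1)) ?shift //; lia.
Qed.

Theorem mainTheorem11 (n k : nat) (x y : seq bool) :
  1 <= k -> 2 * k + 1 <= n ->
  inX n k x -> inX n k y ->
  connector x y \/ connector y x ->
  four_cycle n k x (f x) y (f y).
Proof.
move=> _ n_big inX_x inX_y; have few : k.*2 < n by rewrite -muln2 mulnC -addn1.
case=> [conn|conn]; first exact: connector_four_cycle.
by apply: four_cycle_rot2; exact: connector_four_cycle.
Qed.
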